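(* There exists a non-abelian right-orderable group which has no non-trivial proper normal right relatively convex subgroups but which is not simple; indeed it has a proper non-trivial centre. Such a group can be obtained as $G/N$, where $G=\langle x,y,z\mid x^2=y^3=z^7=xyz\rangle$ and $N$ is a maximal proper normal right relatively convex subgroup of $G$.
   Context: A group is right-orderable if it admits a total order $\le$ with $x\le y\Rightarrow xz\le yz$. A subgroup $H$ of a right-orderable group $G$ is right relatively convex if there is a right order on $G$ with respect to which $H$ is convex (i.e., $h_1\le g\le h_2$ with $h_1,h_2\in H$ implies $g\in H$). The group $G=\langle x,y,z\mid x^2=y^3=z^7=xyz\rangle$ is right-orderable and perfect (G. M. Bergman). *)

From Stdlib Require Import List.
Set Implicit Arguments.

Record Group := mkGroup {
  carrier :> Type;
  gmul : carrier -> carrier -> carrier;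
  gone : carrier;
  ginv : carrier -> carrier;
  gmulA : forall a b c, gmul a (gmul b c) = gmul (gmul a b) c;
  gmul1g : forall a, gmul gone a = a;
  gmulVg : forall a, gmul (ginv a) a = gone
}.

Section GroupDefs.
Variable G : Group.

Definition subgroup (H : G -> Prop) : Prop :=
  H (gone G) /\ (forall a b, H a -> H b -> H (gmul G a b)) /\
  (forall a, H a -> H (ginv G a)).

Definition normal_subgroup (H : G -> Prop) : Prop :=
  subgroup H /\ forall g h, H h -> H (gmul G (gmul G (ginv G g) h) g).

Definition right_order (le : G -> G -> Prop) : Prop :=
  (forall a, le a a) /\
  (forall a b, le a b -> le b a -> a = b) /\
  (forall a b c, le a b -> le b c -> le a c) /\
  (forall a b, le a b \/ le b a) /\
  (forall a b c, le a b -> le (gmul G a c) (gmul G b c)).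

Definition right_orderable : Prop := exists le, right_order le.

Definition convex_wrt (le : G -> G -> Prop) (H : G -> Prop) : Prop :=
  forall h1 h2 g, H h1 -> H h2 -> le h1 g -> le g h2 -> H g.

Definition right_rel_convex (H : G -> Prop) : Prop :=
  subgroup H /\ exists le, right_order le /\ convex_wrt le H.

Definition proper (H : G -> Prop) : Prop := exists g, ~ H g.
Definition nontrivial (H : G -> Prop) : Prop := exists h, H h /\ h <> gone G.

Definition prop_normal_rrc (H : G -> Prop) : Prop :=
  normal_subgroup H /\ right_rel_convex H /\ proper H.

Definition maximal_prop_normal_rrc (N : G -> Prop) : Prop :=
  prop_normal_rrc N /\
  forall M, prop_normal_rrc M -> (forall g, N g -> M g) -> forall g, M g -> N g.

Definition abelian : Prop := forall a b, gmul G a b = gmul G b a.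

Definition central (g : G) : Prop := forall h, gmul G g h = gmul G h g.

Definition simple_group : Prop :=
  (exists g, g <> gone G) /\
  forall N, normal_subgroup N -> (forall n, N n -> n = gone G) \/ (forall g, N g).

Definition perfect : Prop :=
  forall g, exists l : list (G * G),
    g = List.fold_right (fun p acc =>
          gmul G (gmul G (gmul G (ginv G (fst p)) (ginv G (snd p))) (gmul G (fst p) (snd p))) acc)
        (gone G) l.

Definition good_group : Prop :=
  ~ abelian /\ right_orderable /\
  (forall M, normal_subgroup M -> right_rel_convex M -> proper M -> nontrivial M -> False) /\
  ~ simple_group /\
  (exists g, central g /\ g <> gone G) /\ (exists g, ~ central g).

End GroupDefs.

Definition hom (G H : Group) (f : G -> H) : Prop :=
  forall a b, f (gmul G a b) = gmul H (f a) (f b).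

Arguments hom : clear implicits.
(* (G, x, y, z) is a presentation of <x,y,z | x^2 = y^3 = z^7 = xyz>,
   expressed by its universal property. *)
Definition rel237 (H : Group) (a b c : H) : Prop :=
  let m := gmul H in
  m a a = m b (m b b) /\
  m b (m b b) = m c (m c (m c (m c (m c (m c c))))) /\
  m c (m c (m c (m c (m c (m c c))))) = m (m a b) c.

Arguments rel237 : clear implicits.
Definition presents237 (G : Group) (x y z : G) : Prop :=
  rel237 G x y z /\
  forall (H : Group) (a b c : H), rel237 H a b c ->
    (exists f : G -> H, hom G H f /\ f x = a /\ f y = b /\ f z = c) /\
    (forall f1 f2 : G -> H, hom G H f1 -> hom G H f2 ->
       f1 x = f2 x -> f1 y = f2 y -> f1 z = f2 z -> forall g, f1 g = f2 g).
Arguments presents237 : clear implicits.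

(* Modulo a proper normal relatively convex subgroup M, the group G/M is right-orderable,
   hence torsion-free.  As x^2 = y^3 = z^7 is central, x^2 lies in no such M: otherwise
   x, y and z, hence G, would lie in M.  As G is right-orderable, relative convexity of a
   normal subgroup N amounts to a "relative cone" (the preimage of a positive cone of G/N),
   and a limit of such cones along an ultrafilter shows that the union of a chain of such
   subgroups avoiding x^2 is again one; Zorn's lemma gives a maximal N.  In G/N the image of
   x^2 is a nontrivial central element, G/N is not abelian because G is perfect, and a
   nontrivial proper normal relatively convex subgroup of G/N would pull back to one of G
   strictly containing N. *)

From mathcomp Require Import all_boot all_fingroup.
From mathcomp Require Import boolp classical_sets filter.

Section GroupLemmas.
Context {G : Group}.
Local Notation "a ** b" := (gmul G a b) (at level 40, left associativity).
Local Notation one := (gone G).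
Local Notation inv := (ginv G).

Lemma gmulgV a : a ** inv a = one.
Proof.
rewrite -{1}(gmul1g G (a ** inv a)) -{1}(gmulVg G (inv a)).
by rewrite -gmulA (gmulA _ (inv a) a) gmulVg gmul1g gmulVg.
Qed.

Lemma gmulg1 a : a ** one = a.
Proof. by rewrite -(gmulVg G a) gmulA gmulgV gmul1g. Qed.

Lemma gmulKg a b : inv a ** (a ** b) = b.
Proof. by rewrite gmulA gmulVg gmul1g. Qed.

Lemma gmulKVg a b : a ** (inv a ** b) = b.
Proof. by rewrite gmulA gmulgV gmul1g. Qed.

Lemma gmulgK a b : a ** b ** inv b = a.
Proof. by rewrite -gmulA gmulgV gmulg1. Qed.

Lemma gmulgKV a b : a ** inv b ** b = a.
Proof. by rewrite -gmulA gmulVg gmulg1. Qed.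

Lemma gmulgI a : injective (gmul G a).
Proof. by move=> b c E; rewrite -(gmulKg a b) E gmulKg. Qed.

Lemma gmulIg a : injective (gmul G ^~ a).
Proof. by move=> b c /= E; rewrite -(gmulgK b a) E gmulgK. Qed.

Lemma ginv_uniq a b : a ** b = one -> inv a = b.
Proof. by move=> E; apply: (gmulgI a); rewrite gmulgV E. Qed.

Lemma ginvK a : inv (inv a) = a.
Proof. by apply: ginv_uniq; rewrite gmulVg. Qed.

Lemma ginvM a b : inv (a ** b) = inv b ** inv a.
Proof. by apply: ginv_uniq; rewrite -gmulA (gmulA _ b) gmulgV gmul1g gmulgV. Qed.

Lemma ginv1 : inv one = one.
Proof. by apply: ginv_uniq; rewrite gmul1g. Qed.

Lemma ginv_div a b : inv (a ** inv b) = b ** inv a.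
Proof. by rewrite ginvM ginvK. Qed.

Lemma gdiv_trans a b c : c ** inv a = (c ** inv b) ** (b ** inv a).
Proof. by rewrite -gmulA gmulKg. Qed.

Fixpoint gexp (g : G) (n : nat) : G := if n is n'.+1 then g ** gexp g n' else one.

Lemma gexpSr g n : gexp g n.+1 = gexp g n ** g.
Proof.
elim: n => [|n IHn] /=; first by rewrite gmulg1 gmul1g.
by rewrite -gmulA -IHn.
Qed.

Lemma ginv_gexp g n : inv (gexp g n) = gexp (inv g) n.
Proof.
elim: n => [|n IHn]; first exact: ginv1.
by rewrite gexpSr ginvM IHn.
Qed.

Lemma mul_closed_gexpS {S : G -> Prop} {g} n :
  (forall a b, S a -> S b -> S (a ** b)) -> S g -> S (gexp g n.+1).
Proof.
move=> SM Sg; elim: n => [|n IHn]; first by rewrite /= gmulg1.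
by rewrite gexpSr; apply: SM.
Qed.

Lemma subgroup1 {N} : subgroup G N -> N one.
Proof. by case. Qed.

Lemma subgroupM {N a b} : subgroup G N -> N a -> N b -> N (a ** b).
Proof. by case=> _ [+ _]; apply. Qed.

Lemma subgroupV {N a} : subgroup G N -> N a -> N (inv a).
Proof. by case=> _ [_]; apply. Qed.

Lemma subgroup_divC {N a b} : subgroup G N -> N (a ** inv b) -> N (b ** inv a).
Proof. by move=> sN /(subgroupV sN); rewrite ginv_div. Qed.

Lemma subgroup_div_trans {N a b c} :
  subgroup G N -> N (c ** inv b) -> N (b ** inv a) -> N (c ** inv a).
Proof. by rewrite (gdiv_trans a b c); apply: subgroupM. Qed.

Lemma normal_conj {N h} g : normal_subgroup G N -> N h -> N (g ** h ** inv g).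
Proof. by case=> _ nN /(nN (inv g)); rewrite ginvK. Qed.

Lemma center_normal : normal_subgroup G (central G).
Proof.
have cV a : central G a -> central G (inv a).
  by move=> ca h; apply: (gmulgI a); rewrite gmulKVg gmulA ca gmulgK.
split; first split; [|split|].
- by move=> h; rewrite gmul1g gmulg1.
- by move=> a b ca cb h; rewrite -gmulA cb gmulA ca -gmulA.
- exact: cV.
- by move=> g h ch; rewrite -gmulA ch gmulA gmulVg gmul1g.
Qed.

Lemma not_simple_of_center :
  ~ abelian G -> (exists g, central G g /\ g <> one) -> ~ simple_group G.
Proof.
move=> nab [c [cc c1]] [_ simpleG].
case: (simpleG (central G) center_normal) => [triv|allc].
  exact: (c1 (triv c cc)).
by apply: nab => a b; apply: allc.
Qed.

End GroupLemmas.

Section Homomorphisms.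
Context {G H : Group} {f : G -> H}.
Hypothesis hf : hom G H f.

Lemma hom1 : f (gone G) = gone H.
Proof. by apply: (gmulgI (f (gone G))); rewrite -hf gmul1g gmulg1. Qed.

Lemma homV a : f (ginv G a) = ginv H (f a).
Proof. by apply/esym/ginv_uniq; rewrite -hf gmulgV hom1. Qed.

Lemma normal_preim {M} : normal_subgroup H M -> normal_subgroup G (M \o f).
Proof.
case=> sM nM; split; first split; [|split|] => /=.
- by rewrite hom1; apply: subgroup1.
- by move=> a b Ma Mb; rewrite hf; apply: subgroupM.
- by move=> a Ma; rewrite homV; apply: subgroupV.
- by move=> g h Mh; rewrite !hf homV; apply: nM.
Qed.

Lemma hom_surj_central {g} : (forall h, exists a, f a = h) ->
  central G g -> central H (f g).
Proof. by move=> fsurj cg h; have [a <-] := fsurj h; rewrite -!hf cg. Qed.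

Lemma perfect_hom_abelian : perfect G -> abelian H -> forall g, f g = gone H.
Proof.
move=> perfG abH g; have [l ->] := perfG g; elim: l => [|[a b] l IHl] /=.
  exact: hom1.
rewrite hf IHl gmulg1 !hf !homV (abH (ginv H (f a))) -gmulA gmulKg.
exact: gmulVg.
Qed.

End Homomorphisms.

Section RelativeCone.
Context {G : Group}.
Local Notation "a ** b" := (gmul G a b) (at level 40, left associativity).
Local Notation one := (gone G).
Local Notation inv := (ginv G).

Definition relative_cone (N P : G -> Prop) : Prop :=
  [/\ forall a b, P a -> P b -> P (a ** b),
      forall n p, N n -> P p -> P (n ** p),
      forall g, P g -> ~ N g &
      forall g, N g \/ P g \/ P (inv g)].

Lemma relative_cone_of_rrc {N} : right_rel_convex G N -> exists P, relative_cone N P.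
Proof.
move=> [sN [le [[refl [anti [trans [total compat]]]] conv]]].
have le1V g : le g one -> le one (inv g).
  by move/(compat _ _ (inv g)); rewrite gmulgV gmul1g.
exists (fun g => ~ N g /\ le one g); split.
- move=> a b [Na le1a] [Nb le1b]; have leb : le b (a ** b).
    by have := compat _ _ b le1a; rewrite gmul1g.
  split; last exact: (trans _ _ _ le1b leb).
  by move=> Nab; apply: Nb; apply: (conv _ _ b (subgroup1 sN) Nab).
- move=> n p Nn [Np le1p]; split.
    move=> Nnp; apply: Np; rewrite -(gmulKg n p).
    exact: (subgroupM sN (subgroupV sN Nn) Nnp).
  case: (total one (n ** p)) => // lenp1; case: Np.
  have le1 : le n (inv p) by have := compat _ _ (inv p) lenp1; rewrite gmulgK gmul1g.
  have le2 : le (inv p) one by have := compat _ _ (inv p) le1p; rewrite gmul1g gmulgV.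
  by rewrite -(ginvK p); apply: (subgroupV sN (conv _ _ _ Nn (subgroup1 sN) le1 le2)).
- by move=> g [].
- move=> g; case: (pselect (N g)) => Ng; [by left|right].
  case: (total one g) => leg; [by left|right; split; last exact: le1V].
  by move/(subgroupV sN); rewrite ginvK.
Qed.

Context {N P : G -> Prop}.
Hypothesis nN : normal_subgroup G N.
Hypothesis cP : relative_cone N P.

Lemma relative_cone_mulN p n : P p -> N n -> P (p ** n).
Proof.
case: cP => _ NP _ _ Pp Nn; rewrite -(gmulgKV (p ** n) p).
exact: (NP _ _ (normal_conj p nN Nn) Pp).
Qed.

Lemma relative_cone_asym {a} : P a -> ~ P (inv a).
Proof.
case: cP => PM _ PN _ Pa Pia; apply: (PN one); last exact: (subgroup1 nN.1).
by rewrite -(gmulgV a); apply: PM.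
Qed.

(* Lexicographic: first the order of G/N given by [P], then [le] inside a coset of N. *)
Definition cone_order (le : G -> G -> Prop) (a b : G) : Prop :=
  P (b ** inv a) \/ N (b ** inv a) /\ le a b.

Lemma cone_order_right_order le : right_order G le -> right_order G (cone_order le).
Proof.
case=> refl [anti [trans [total compat]]]; have sN := nN.1.
case: cP => PM NP PN Ptot.
split; [|split; [|split; [|split]]].
- by move=> a; right; rewrite gmulgV; split; [exact: (subgroup1 sN)|].
- move=> a b [Pba|[Nba lab]] [Pab|[Nab lba]]; last exact: anti.
  + by case: (relative_cone_asym Pba); rewrite ginv_div.
  + by case: (PN _ Pba); apply: subgroup_divC.
  + by case: (PN _ Pab); apply: subgroup_divC.
- move=> a b c; rewrite /cone_order (gdiv_trans a b c).
  case=> [Pba|[Nba lab]] [Pcb|[Ncb lbc]].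
  + by left; apply: PM.
  + by left; apply: NP.
  + by left; apply: relative_cone_mulN.
  + by right; split; [exact: subgroupM|exact: (trans _ _ _ lab lbc)].
- move=> a b; case: (Ptot (b ** inv a)) => [Nba|[Pba|]].
  + by case: (total a b) => ?; [left|right]; right; split=> //; apply: subgroup_divC.
  + by left; left.
  + by rewrite ginv_div => Pab; right; left.
- move=> a b c; rewrite /cone_order ginvM gmulA gmulgK.
  by case=> [?|[? ?]]; [left|right; split=> //; apply: compat].
Qed.

Lemma convex_cone_order le : convex_wrt G (cone_order le) N.
Proof.
have sN := nN.1; case: cP => PM _ PN _.
move=> h1 h2 g Nh1 Nh2 [P1|[N1 _]] [P2|[N2 _]].
- case: (PN (h2 ** inv h1)); first by rewrite (gdiv_trans h1 g h2); apply: PM.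
  exact: (subgroupM sN Nh2 (subgroupV sN Nh1)).
- by rewrite -(gmulgKV g h2); exact: (subgroupM sN (subgroup_divC sN N2) Nh2).
- by rewrite -(gmulgKV g h1); exact: (subgroupM sN N1 Nh1).
- by rewrite -(gmulgKV g h1); exact: (subgroupM sN N1 Nh1).
Qed.

Lemma rrc_of_relative_cone : right_orderable G -> right_rel_convex G N.
Proof.
case=> le ro; split; first exact: nN.1.
exists (cone_order le); split; [exact: cone_order_right_order|exact: convex_cone_order].
Qed.

Lemma relative_cone_root g n : N (gexp g n.+1) -> N g.
Proof.
case: cP => PM _ PN Ptot Ngn; case: (Ptot g) => [//|[Pg|Pig]].
  by case: (PN _ (mul_closed_gexpS n PM Pg)).
case: (PN _ (mul_closed_gexpS n PM Pig)).
by rewrite -ginv_gexp; apply: (subgroupV nN.1 Ngn).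
Qed.

End RelativeCone.

Lemma relative_cone_preim {G H : Group} {f : G -> H} {M P : H -> Prop} :
  hom G H f -> relative_cone M P -> relative_cone (M \o f) (P \o f).
Proof.
move=> hf [PM NP PN Ptot]; split=> /=.
- by move=> a b Pa Pb; rewrite hf; apply: PM.
- by move=> n p Mn Pp; rewrite hf; apply: NP.
- by move=> g; apply: PN.
- by move=> g; rewrite (homV hf); apply: Ptot.
Qed.

Section Quotient.
Context {G : Group}.
Variable N : G -> Prop.
Hypothesis nN : normal_subgroup G N.
Local Notation "a ** b" := (gmul G a b) (at level 40, left associativity).
Local Notation one := (gone G).
Local Notation inv := (ginv G).
Let sN := nN.1.

Definition coset (g : G) : G -> Prop := fun h => N (h ** inv g).

Definition quot_elem : Type := {S : G -> Prop | exists g, S = coset g}.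

Definition qproj (g : G) : quot_elem := exist _ (coset g) (ex_intro _ g erefl).

Definition qrep (q : quot_elem) : G := proj1_sig (cid (proj2_sig q)).

Lemma coset_eq a b : coset a = coset b <-> N (a ** inv b).
Proof.
split=> [Eab|Nab].
  have : coset a a by rewrite /coset gmulgV; exact: (subgroup1 sN).
  by rewrite Eab.
apply: funext => h; apply: propext; split.
  by move=> Nha; apply: (subgroup_div_trans sN Nha Nab).
by move=> Nhb; apply: (subgroup_div_trans sN Nhb (subgroup_divC sN Nab)).
Qed.

Lemma qproj_eq a b : qproj a = qproj b <-> N (a ** inv b).
Proof.
rewrite -coset_eq; split=> [/(congr1 (@proj1_sig _ _))//|Eab].
exact: eq_exist.
Qed.

Lemma qrepK q : qproj (qrep q) = q.
Proof.
case: q => S hS; rewrite /qrep /=; case: (cid hS) => g /= ESg.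
exact: eq_exist.
Qed.

Lemma qproj_surj q : exists g, qproj g = q.
Proof. by exists (qrep q); exact: qrepK. Qed.

Lemma qrep_proj a : N (qrep (qproj a) ** inv a).
Proof. by apply/qproj_eq; rewrite qrepK. Qed.

Definition qmul (q r : quot_elem) : quot_elem := qproj (qrep q ** qrep r).
Definition qinv (q : quot_elem) : quot_elem := qproj (inv (qrep q)).

Lemma qmul_proj a b : qmul (qproj a) (qproj b) = qproj (a ** b).
Proof.
apply/qproj_eq; set a' := qrep (qproj a); set b' := qrep (qproj b).
have -> : a' ** b' ** inv (a ** b) = (a' ** (b' ** inv b) ** inv a') ** (a' ** inv a).
  by rewrite ginvM !gmulA gmulgKV.
apply: (subgroupM sN (normal_conj a' nN (qrep_proj b)) (qrep_proj a)).
Qed.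

Lemma qinv_proj a : qinv (qproj a) = qproj (inv a).
Proof.
apply/qproj_eq; rewrite ginvK.
have := subgroupV sN (normal_conj (inv a) nN (qrep_proj a)).
by rewrite ginvK gmulA gmulgKV ginvM ginvK.
Qed.

Lemma qmulA q r s : qmul q (qmul r s) = qmul (qmul q r) s.
Proof.
have [a <-] := qproj_surj q; have [b <-] := qproj_surj r; have [c <-] := qproj_surj s.
by rewrite !qmul_proj gmulA.
Qed.

Lemma qmul1q q : qmul (qproj one) q = q.
Proof. by have [a <-] := qproj_surj q; rewrite qmul_proj gmul1g. Qed.

Lemma qmulVq q : qmul (qinv q) q = qproj one.
Proof. by have [a <-] := qproj_surj q; rewrite qinv_proj qmul_proj gmulVg. Qed.

Definition quotient_group : Group :=
  @mkGroup quot_elem qmul (qproj one) qinv qmulA qmul1q qmulVq.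

Lemma quotient_hom : hom G quotient_group qproj.
Proof. by move=> a b; rewrite /= qmul_proj. Qed.

Lemma quotient_ker g : qproj g = gone quotient_group <-> N g.
Proof. by rewrite /= qproj_eq ginv1 gmulg1. Qed.

Section QuotientOrder.
Context {P : G -> Prop}.
Hypothesis cP : relative_cone N P.

(* The total right-invariant preorder on [G] induced by [P]; its classes are the cosets of [N]. *)
Definition cone_le (a b : G) : Prop := P (b ** inv a) \/ N (b ** inv a).

Lemma cone_le_coset a a' b b' :
  N (a' ** inv a) -> N (b' ** inv b) -> cone_le a b -> cone_le a' b'.
Proof.
move=> Na Nb; rewrite /cone_le.
have -> : b' ** inv a' = (b' ** inv b) ** (b ** inv a) ** inv (a' ** inv a).
  by rewrite ginv_div !gmulA gmulgKV gmulgKV.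
case: cP => _ NP _ _ [Pba|Nba]; [left|right].
  by apply: (relative_cone_mulN nN cP _ _ (NP _ _ Nb Pba) (subgroupV sN Na)).
by apply: (subgroupM sN (subgroupM sN Nb Nba) (subgroupV sN Na)).
Qed.

Definition quot_le (q r : quotient_group) : Prop := cone_le (qrep q) (qrep r).

Lemma quot_le_proj a b : quot_le (qproj a) (qproj b) <-> cone_le a b.
Proof.
have Na := qrep_proj a; have Nb := qrep_proj b.
split; last exact: cone_le_coset.
by apply: cone_le_coset; [exact: (subgroup_divC sN Na)|exact: (subgroup_divC sN Nb)].
Qed.

Lemma quotient_right_orderable : right_orderable quotient_group.
Proof.
case: cP => PM NP PN Ptot; have PV := relative_cone_asym nN cP.
exists quot_le; split; [|split; [|split; [|split]]].
- move=> q; have [a <-] := qproj_surj q; apply/quot_le_proj; right.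
  by rewrite gmulgV; exact: (subgroup1 sN).
- move=> q r; have [a <-] := qproj_surj q; have [b <-] := qproj_surj r.
  move=> /quot_le_proj[Pba|Nba] /quot_le_proj[Pab|Nab]; apply/qproj_eq => //.
  + by case: (PV _ Pab); rewrite ginv_div.
  + by case: (PN _ Pab); exact: (subgroup_divC sN Nba).
- move=> q r s; have [a <-] := qproj_surj q; have [b <-] := qproj_surj r.
  have [c <-] := qproj_surj s; rewrite !quot_le_proj /cone_le (gdiv_trans a b c).
  case=> [Pba|Nba] [Pcb|Ncb].
  + by left; apply: PM.
  + by left; apply: NP.
  + by left; apply: (relative_cone_mulN nN cP _ _ Pcb Nba).
  + by right; apply: (subgroupM sN Ncb Nba).
- move=> q r; have [a <-] := qproj_surj q; have [b <-] := qproj_surj r.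
  rewrite !quot_le_proj /cone_le.
  case: (Ptot (b ** inv a)) => [Nba|[Pba|]]; [by left; right|by left; left|].
  by rewrite ginv_div => Pab; right; left.
- move=> q r s; have [a <-] := qproj_surj q; have [b <-] := qproj_surj r.
  have [c <-] := qproj_surj s; rewrite /= !qmul_proj !quot_le_proj /cone_le.
  by rewrite ginvM gmulA gmulgK.
Qed.

End QuotientOrder.

End Quotient.

Arguments quotient_group {G N}.
Arguments quotient_hom {G N}.
Arguments quotient_ker {G N}.
Arguments quotient_right_orderable {G N} nN {P}.

Local Open Scope classical_set_scope.

Section ChainUnion.
Context {G : Group} {C : set (G -> Prop)}.
Hypothesis normalC : forall N, C N -> normal_subgroup G N.
Hypothesis chainC : total_on C subset.
Hypothesis C_neq0 : C !=set0.
Local Notation U := (\bigcup_(N in C) N).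

Lemma chain_common_member {N1 N2 a b} :
  C N1 -> C N2 -> N1 a -> N2 b -> exists2 N, C N & N a /\ N b.
Proof.
move=> C1 C2 N1a N2b; case: (chainC _ _ C1 C2) => [S12|S21].
  by exists N2 => //; split=> //; apply: S12.
by exists N1 => //; split=> //; apply: S21.
Qed.

Lemma normal_chain_union : normal_subgroup G U.
Proof.
have [N0 CN0] := C_neq0.
split; first split; [|split|].
- by exists N0 => //; exact: (subgroup1 (normalC _ CN0).1).
- move=> a b [N1 C1 N1a] [N2 C2 N2b].
  have [N CN [Na Nb]] := chain_common_member C1 C2 N1a N2b.
  by exists N => //; exact: (subgroupM (normalC _ CN).1 Na Nb).
- by move=> a [N CN Na]; exists N => //; exact: (subgroupV (normalC _ CN).1 Na).
- by move=> g h [N CN Nh]; exists N => //; exact: (normalC _ CN).2.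
Qed.

(* Compactness of the space of orders: a relative cone of the union is the limit, along an
   ultrafilter refining the filter of tails of the chain, of relative cones of its members. *)
Lemma relative_cone_chain_union :
  (forall N, C N -> exists P, relative_cone N P) -> exists P, relative_cone U P.
Proof.
move=> coneC.
have /choice[Pof PofP] : forall N, exists P, C N -> relative_cone N P.
  move=> N; case: (pselect (C N)) => [/coneC[P cP]|nCN]; first by exists P.
  by exists (fun _ => False).
pose tail N1 := [set N | C N /\ N1 `<=` N].
have tailF : ProperFilter (filter_from C tail).
  apply: filter_from_proper => [|N1 C1]; last by exists N1; split.
  apply: filter_from_filter => // N1 N2 C1 C2; case: (chainC _ _ C1 C2) => S.
    by exists N2 => // N [CN S2]; split; split=> //; exact: (subset_trans S S2).
  by exists N1 => // N [CN S1]; split; split=> //; exact: (subset_trans S S1).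
have [Uf [UfU tailUf]] := ultraFilterLemma tailF.
have Uftail N1 : C N1 -> Uf (tail N1) by move=> C1; apply/tailUf/in_filter_from.
have UfC : Uf C by have [N0 C0] := C_neq0; apply: filterS (Uftail N0 C0) => N [].
exists (fun g => Uf [set N | Pof N g]); split.
- move=> a b Pa Pb; apply: filterS3 UfC Pa Pb => N CN.
  by case: (PofP _ CN) => PM _ _ _; apply: PM.
- move=> n p [N1 C1 N1n] Pp; apply: filterS2 (Uftail N1 C1) Pp => N [CN S1].
  by case: (PofP _ CN) => _ NP _ _; exact: (NP _ _ (S1 _ N1n)).
- move=> g Pg [N1 C1 N1g]; apply: (filter_not_empty Uf).
  apply: filterS2 (Uftail N1 C1) Pg => N [CN S1].
  by case: (PofP _ CN) => _ _ PN _ /PN; apply; apply: S1.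
- move=> g; case: (pselect (U g)) => Ug; [by left|right].
  case: (in_ultra_setVsetC [set N | Pof N g] UfU) => nPg; [by left|right].
  apply: filterS2 UfC nPg => N CN /= nPNg.
  case: (PofP _ CN) => _ _ _ /(_ g) [Ng|[//|//]].
  by case: Ug; exists N.
Qed.

End ChainUnion.

Lemma prop_normal_rrc_chain_union {G : Group} {C : set (G -> Prop)} (b : G) :
  right_orderable G -> total_on C subset -> C !=set0 ->
  (forall N, C N -> prop_normal_rrc G N /\ ~ N b) ->
  prop_normal_rrc G (\bigcup_(N in C) N).
Proof.
move=> RO chainC C_neq0 HC.
have normalC N : C N -> normal_subgroup G N by move=> /HC[[]].
have nU := normal_chain_union normalC chainC C_neq0.
have coneC N : C N -> exists P, relative_cone N P.
  by move=> CN; exact: (relative_cone_of_rrc (HC _ CN).1.2.1).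
have [P cP] := relative_cone_chain_union chainC C_neq0 coneC.
split=> //; split; first exact: (rrc_of_relative_cone nU cP RO).
by exists b => -[N /HC[_ Nb]].
Qed.

Lemma prop_normal_rrc_preim {G H : Group} {f : G -> H} {M : H -> Prop} :
  right_orderable G -> hom G H f -> (forall h, exists g, f g = h) ->
  prop_normal_rrc H M -> prop_normal_rrc G (M \o f).
Proof.
move=> RO hf fsurj [nM [rrcM [h0 Mh0]]].
have [P cP] := relative_cone_of_rrc rrcM.
have nMf := normal_preim hf nM.
split=> //; split; first exact: (rrc_of_relative_cone nMf (relative_cone_preim hf cP) RO).
by have [g fg] := fsurj h0; exists g; rewrite /= fg.
Qed.

Lemma prop_normal_rrc_mod_maximal {G H : Group} {f : G -> H} {N : G -> Prop} :
  right_orderable G -> hom G H f -> (forall h, exists g, f g = h) ->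
  (forall g, f g = gone H <-> N g) -> maximal_prop_normal_rrc G N ->
  forall M, prop_normal_rrc H M -> forall h, M h -> h = gone H.
Proof.
move=> RO hf fsurj kerf [_ maxN] M pM h Mh; have [g fg] := fsurj h.
rewrite -fg; apply/kerf; apply: (maxN (M \o f)); rewrite /= ?fg //.
  exact: prop_normal_rrc_preim.
by move=> n /kerf /= ->; exact: (subgroup1 pM.1.1).
Qed.

Section TrianglePermutations.
Local Open Scope group_scope.

Definition perm7_fun (s : seq nat) (i : 'I_7) : 'I_7 :=
  Ordinal (@ltn_pmod (nth 0%N s i) 7 isT).

Ltac case_ord7 := let i := fresh in let lti := fresh in
  move=> [i lti]; apply/val_inj; do 7 (case: i lti => [|i] lti; first by []); by [].

Lemma perm7_inj (s t : seq nat) :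
  (forall i, perm7_fun t (perm7_fun s i) = i) -> injective (perm7_fun s).
Proof. exact: can_inj. Qed.

Definition s7a : {perm 'I_7} :=
  perm (@perm7_inj [:: 1; 0; 3; 2; 4; 5; 6]%N [:: 1; 0; 3; 2; 4; 5; 6]%N ltac:(case_ord7)).
Definition s7b : {perm 'I_7} :=
  perm (@perm7_inj [:: 0; 2; 4; 5; 1; 6; 3]%N [:: 0; 4; 1; 6; 2; 3; 5]%N ltac:(case_ord7)).
Definition s7c : {perm 'I_7} :=
  perm (@perm7_inj [:: 1; 4; 0; 6; 3; 2; 5]%N [:: 2; 0; 5; 4; 1; 6; 3]%N ltac:(case_ord7)).

Definition sym7 : Group := @mkGroup {perm 'I_7} (fun p q => p * q) 1 (fun p => p^-1)
  (@mulgA _) (@mul1g _) (@mulVg _).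

Lemma sym7_rel237 : rel237 sym7 s7a s7b s7c.
Proof.
have eq1 (p : {perm 'I_7}) : (forall i, p i = i) -> p = 1.
  by move=> pi; apply/permP => i; rewrite pi perm1.
have [a2 b3 c7 abc] : [/\ s7a * s7a = 1, s7b * (s7b * s7b) = 1,
    s7c * (s7c * (s7c * (s7c * (s7c * (s7c * s7c)))))= 1 & s7a * s7b * s7c = 1].
  by split; apply: eq1 => i; rewrite !permM !permE; move: i; case_ord7.
by rewrite /rel237 /= a2 b3 c7 abc.
Qed.

Lemma s7a_neq1 : s7a <> 1.
Proof. by move/permP/(_ ord0)/(congr1 val); rewrite !permE. Qed.

End TrianglePermutations.

Section TriangleGroup.
Context {G : Group} {x y z : G}.
Hypothesis presG : presents237 G x y z.
Hypothesis RO : right_orderable G.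
Local Notation "a ** b" := (gmul G a b) (at level 40, left associativity).
Local Notation one := (gone G).
Local Notation inv := (ginv G).

Lemma presents237_hom_ext {H : Group} {f1 f2 : G -> H} :
  hom G H f1 -> hom G H f2 -> f1 x = f2 x -> f1 y = f2 y -> f1 z = f2 z ->
  forall g, f1 g = f2 g.
Proof.
move=> hf1 hf2 ex ey ez; have [_ univG] := presG.
have rel2 : rel237 H (f2 x) (f2 y) (f2 z).
  by have [[e1 [e2 e3]] _] := presG; rewrite /rel237 -!hf2 e1 e2 e3.
exact: ((univG _ _ _ _ rel2).2 f1 f2 hf1 hf2 ex ey ez).
Qed.

Lemma normal_subgroup_gen237 M :
  normal_subgroup G M -> M x -> M y -> M z -> forall g, M g.
Proof.
move=> nM Mx My Mz g; apply/(quotient_ker nM).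
have hone : hom G (quotient_group nM) (fun=> gone _) by move=> a b; rewrite gmul1g.
by apply: (presents237_hom_ext (quotient_hom nM) hone) => /=; apply/(quotient_ker nM).
Qed.

Lemma gen_x_neq1 : x <> one.
Proof.
move=> x1; have [_ univG] := presG.
have [[f [hf [fx _]]] _] := univG _ _ _ _ sym7_rel237.
by apply: s7a_neq1; rewrite -fx x1; exact: (hom1 hf).
Qed.

Lemma central_of_commute237 w :
  w ** x = x ** w -> w ** y = y ** w -> w ** z = z ** w -> central G w.
Proof.
move=> wx wy wz g; apply: (gmulIg (inv w)); rewrite gmulgK.
have hconj : hom G G (fun a => w ** a ** inv w) by move=> a b; rewrite !gmulA gmulgKV.
have hid : hom G G id by [].
by apply: (presents237_hom_ext hconj hid _ _ _ g); rewrite /= ?wx ?wy ?wz gmulgK.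
Qed.

Lemma central_sq_x : central G (x ** x).
Proof.
have [[e1 [e2 _]] _] := presG.
apply: central_of_commute237; first by rewrite gmulA.
  by rewrite e1 !gmulA.
by rewrite e1 e2 !gmulA.
Qed.

Lemma sq_x_notin_prop_normal_rrc {M} : prop_normal_rrc G M -> ~ M (x ** x).
Proof.
move=> [nM [rrcM [g0 Mg0]]] Mx2; apply: Mg0.
have [P cP] := relative_cone_of_rrc rrcM.
have [[e1 [e2 _]] _] := presG.
apply: normal_subgroup_gen237 => //.
- by apply: (relative_cone_root nM cP _ 1); rewrite /= gmulg1.
- by apply: (relative_cone_root nM cP _ 2); rewrite /= gmulg1 -e1.
- by apply: (relative_cone_root nM cP _ 6); rewrite /= gmulg1 -e2 -e1.
Qed.

Lemma trivial_prop_normal_rrc : prop_normal_rrc G (fun g => g = one).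
Proof.
have sT : subgroup G (fun g => g = one).
  by split=> //; split=> [a b -> ->|a ->]; [rewrite gmul1g|rewrite ginv1].
split; first by split=> // g h ->; rewrite gmulg1 gmulVg.
split; last by exists x; exact: gen_x_neq1.
split=> //; have [le ro] := RO; exists le; split=> //.
by case: ro => _ [anti _] h1 h2 g -> -> le1g leg1; apply: anti.
Qed.

Lemma exists_maximal_prop_normal_rrc : exists N, maximal_prop_normal_rrc G N.
Proof.
(* [set0] is admitted so that the empty chain has an upper bound. *)
pose R (X : set G) := X = set0 \/ prop_normal_rrc G X.
have [A [RA maxA]] : exists A, R A /\ forall B, A `<` B -> ~ R B.
  apply: Zorn_bigcup => F FR chainF.
  pose C := F `&` prop_normal_rrc G.
  have -> : \bigcup_(X in F) X = \bigcup_(X in C) X.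
    apply/seteqP; split=> g [X FX Xg]; exists X => //; last by case: FX.
    by split=> //; case: (FR _ FX) => // X0; rewrite X0 in Xg.
  case: (pselect (C !=set0)) => [C_neq0|C0]; last first.
    by left; apply/seteqP; split=> g // [X CX _]; case: C0; exists X.
  right; apply: (prop_normal_rrc_chain_union (x ** x)) => //.
    by move=> X1 X2 [F1 _] [F2 _]; apply: chainF.
  by move=> X [_ pX]; split=> //; apply: sq_x_notin_prop_normal_rrc.
have pA : prop_normal_rrc G A.
  case: RA => // A0; case: (maxA _ _ (or_intror trivial_prop_normal_rrc)).
  by rewrite A0; split=> // sub; exact: (sub _ erefl).
exists A; split=> // M pM AM g Mg; apply: contrapT => nAg.
by apply: (maxA M); [split=> // MA; exact: (nAg (MA _ Mg))|right].
Qed.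

Hypothesis perfG : perfect G.

Lemma quotient_maximal_good N : maximal_prop_normal_rrc G N ->
  exists (Q : Group) (phi : G -> Q),
    hom G Q phi /\ (forall q : Q, exists g, phi g = q) /\
    (forall g, phi g = gone Q <-> N g) /\ good_group Q.
Proof.
move=> maxN; have [[nN [rrcN _]] _] := maxN.
have [P cP] := relative_cone_of_rrc rrcN.
pose Q := quotient_group nN.
have hq : hom G Q (qproj N) := quotient_hom nN.
have qsurj : forall q : Q, exists g, qproj N g = q := @qproj_surj _ N.
have kerq := quotient_ker nN.
have c_neq1 : qproj N (x ** x) <> gone Q by move/kerq; apply: (sq_x_notin_prop_normal_rrc maxN.1).
have cc := hom_surj_central hq qsurj central_sq_x.
have nabQ : ~ abelian Q.
  by move=> abQ; apply: c_neq1; exact: (perfect_hom_abelian hq perfG abQ).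
exists Q, (qproj N); do 3!split=> //.
split=> //; split; first exact: (quotient_right_orderable nN cP).
split.
  move=> M nM rrcM prM [h [Mh h_neq1]]; apply: h_neq1.
  by apply: (prop_normal_rrc_mod_maximal RO hq qsurj kerq maxN M).
split; first by apply: (not_simple_of_center nabQ _); exists (qproj N (x ** x)).
split; first by exists (qproj N (x ** x)).
by apply/existsNP => allc; apply: nabQ => a b; exact: (allc a b).
Qed.

End TriangleGroup.

Theorem mainTheorem4 (G : Group) (x y z : G) :
  presents237 G x y z ->
  right_orderable G ->   (* Bergman *)
  perfect G ->           (* Bergman *)
  (exists Q : Group, good_group Q) /\
  (exists N : G -> Prop, maximal_prop_normal_rrc G N) /\
  (forall N : G -> Prop, maximal_prop_normal_rrc G N ->
     exists (Q : Group) (phi : G -> Q),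
       hom G Q phi /\ (forall q : Q, exists g, phi g = q) /\
       (forall g, phi g = gone Q <-> N g) /\
       good_group Q).
Proof.
move=> presG RO perfG.
have [N maxN] := exists_maximal_prop_normal_rrc presG RO.
have quotient_good := quotient_maximal_good presG RO perfG.
have [Q [_ [_ [_ [_ goodQ]]]]] := quotient_good N maxN.
by split; [exists Q|split; [exists N|]].
Qed.
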